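(* Let $\mathcal{M}=(a_1^*,\dots,a_L^* )$ be a route with $a_1^*=1$ in which, for each $1\le k<L$, node $a_{k+1}^*$ is a nearest neighbor with respect to $(a_1^*,\dots,a_k^* )$. Let $K\ge1$ and let $b_1,\dots,b_K$ be distinct nodes not in $\mathcal{M}$, where $b_1$ is not a nearest neighbor with respect to $\mathcal{M}$. Let $\mathcal{M}_1=(a_1^*,\dots,a_L^*,b_1,\dots,b_K)$. Assume a nearest neighbor $a_{L+1}^*$ with respect to $\mathcal{M}$ exists. Define $\mathcal{M}_2$ as follows: - if $a_{L+1}^*\notin\{b_1,\dots,b_{K-1}\}$, then $\mathcal{M}_2=(a_1^*,\dots,a_L^*,a_{L+1}^*,b_1,\dots,b_{K-1})$; - if $a_{L+1}^*=b_k$ for some $k\in\{1,\dots,K-1\}$, then $\mathcal{M}_2=(a_1^*,\dots,a_L^*,a_{L+1}^*,b_1,\dots,b_{k-1},b_{k+1},\dots,b_K)$. Then $R_{\mathrm{DF}}(\mathcal{M}_2)\ge R_{\mathrm{DF}}(\mathcal{M}_1)$.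
   Context: Network: a finite set of nodes $\mathcal{S}=\{1,2,\dots,D\}$, $D\ge 2$. Node $1$ is the source and node $D$ is the destination. Received powers: for distinct nodes $i,t$, the power received at $t$ from $i$ is a positive real number $P_{it}$. All receivers have the same noise power $N>0$. Routes: a route is an ordered tuple of distinct nodes $\mathcal{M}=(m_1,\dots,m_L)$ with $m_1=1$ and $L\ge1$. DF with independent codewords: the reception rate of node $m_t$ ($2\le t\le L$) in route $\mathcal{M}$ is $$R_{m_t}(\mathcal{M})=\tfrac12\log\Big(1+N^{-1}\sum_{i=1}^{t-1}P_{m_i m_t}\Big).$$ The supported DF rate (for $L\ge2$) is $R_{\mathrm{DF}}(\mathcal{M})=\min_{2\le t\le L}R_{m_t}(\mathcal{M})$. Nearest neighbor: node $i\notin\mathcal{M}$ is a nearest neighbor with respect to route $\mathcal{M}$ iff $P_{mi}\ge P_{mj}$ for all $m\in\mathcal{M}$ and all $j\in\mathcal{S}\setminus(\mathcal{M}\cup\{i\})$. *)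

From Stdlib Require Import Reals List Arith.
Import ListNotations.
Open Scope R_scope.

Definition in_S (D : nat) (i : nat) : Prop := (1 <= i <= D)%nat.

Definition recv_power (P : nat -> nat -> R) (pre : list nat) (x : nat) : R :=
  fold_right (fun m acc => P m x + acc) 0 pre.

Definition recv_rate (P : nat -> nat -> R) (N : R) (pre : list nat) (x : nat) : R :=
  / 2 * ln (1 + / N * recv_power P pre x).

Fixpoint recv_rates (P : nat -> nat -> R) (N : R) (pre rest : list nat) : list R :=
  match rest with
  | [] => []
  | x :: rest' => recv_rate P N pre x :: recv_rates P N (pre ++ [x]) rest'
  end.

(* Minimum of a nonempty list (value on [] is irrelevant). *)
Fixpoint list_min (l : list R) : R :=
  match l with
  | [] => 0
  | [x] => x
  | x :: l' => Rmin x (list_min l')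
  end.

(* DF rate of a route (meaningful for routes with at least 2 nodes):
   min over t = 2..L of R_{m_t}. *)
Definition R_DF (P : nat -> nat -> R) (N : R) (M : list nat) : R :=
  match M with
  | [] => 0
  | m1 :: rest => list_min (recv_rates P N [m1] rest)
  end.

Definition nearest_neighbor (D : nat) (P : nat -> nat -> R) (M : list nat) (i : nat) : Prop :=
  in_S D i /\ ~ In i M /\
  forall m j, In m M -> in_S D j -> ~ In j M -> j <> i -> P m i >= P m j.

From Stdlib Require Import Reals List Arith Lra Lia.
Import ListNotations.
Open Scope R_scope.

(* Write M1 = a ++ b and M2 = a ++ c :: B2, where B2 is a prefix
   of b with c deleted ("remove c b = B2 ++ t"); both cases of the theorem are
   of this form.  The DF rate of a route is the minimum of the reception rates
   of its nodes, and a reception rate grows with the received power, so it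
   suffices to match every node of M2 outside a with a node of M1 receiving at
   most as much power:
   - c, which hears only a, is matched with b_1, as c is a nearest neighbor;
   - a node x of B2 is matched with itself: everything preceding x in M1 also
     precedes x in M2, where moreover c has been added, and powers are >= 0.
   The file first collects facts about received powers, then the min-of-rates
   description of R_DF and a domination criterion, then the list fact about
   deleting c, and finally the general swap theorem nearest_neighbor_first,
   of which both parts of lemma2 are direct instances.  The argument does not
   need that b_1 is not a nearest neighbor, nor that a itself was built from
   nearest neighbors. *)

Lemma recv_power_app (P : nat -> nat -> R) l1 l2 x :
  recv_power P (l1 ++ l2) x = recv_power P l1 x + recv_power P l2 x.
Proof.
  induction l1 as [|m l1 IH]; unfold recv_power in *; simpl; [lra|].
  rewrite IH; lra.
Qed.

Lemma recv_power_nonneg (P : nat -> nat -> R) l x :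
  (forall m, In m l -> 0 <= P m x) -> 0 <= recv_power P l x.
Proof.
  induction l as [|m l IH]; intro Hl; unfold recv_power in *; simpl; [lra|].
  assert (0 <= P m x) by (apply Hl; left; reflexivity).
  assert (0 <= fold_right (fun m0 acc => P m0 x + acc) 0 l)
    by (apply IH; intros; apply Hl; right; assumption).
  lra.
Qed.

Lemma recv_power_le_pointwise (P : nat -> nat -> R) l x y :
  (forall m, In m l -> P m x <= P m y) -> recv_power P l x <= recv_power P l y.
Proof.
  induction l as [|m l IH]; intro Hl; unfold recv_power in *; simpl; [lra|].
  assert (P m x <= P m y) by (apply Hl; left; reflexivity).
  assert (fold_right (fun m0 acc => P m0 x + acc) 0 l
          <= fold_right (fun m0 acc => P m0 y + acc) 0 l)
    by (apply IH; intros; apply Hl; right; assumption).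
  lra.
Qed.

Lemma recv_power_incl (P : nat -> nat -> R) l1 l2 x :
  NoDup l1 -> incl l1 l2 -> (forall m, In m l2 -> 0 <= P m x) ->
  recv_power P l1 x <= recv_power P l2 x.
Proof.
  revert l2; induction l1 as [|m l1 IH]; intros l2 Hnd Hincl Hnn.
  - apply recv_power_nonneg, Hnn.
  - inversion Hnd as [|? ? Hm Hnd1]; subst.
    destruct (in_split m l2 (Hincl m (or_introl eq_refl))) as [u [w ->]].
    assert (Hrest : recv_power P l1 x <= recv_power P (u ++ w) x).
    { apply IH; [assumption| |].
      - intros z Hz. assert (Hz2 := Hincl z (or_intror Hz)).
        apply in_app_or in Hz2; apply in_or_app.
        destruct Hz2 as [|[<-|]]; [left|contradiction|right]; assumption.
      - intros z Hz; apply Hnn; apply in_app_or in Hz; apply in_or_app.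
        destruct Hz; [left|right; right]; assumption. }
    rewrite recv_power_app in *.
    change (recv_power P (m :: l1) x) with (P m x + recv_power P l1 x).
    change (recv_power P (m :: w) x) with (P m x + recv_power P w x).
    lra.
Qed.

Lemma recv_rate_mono (P : nat -> nat -> R) N pre1 pre2 x y :
  0 < N -> 0 <= recv_power P pre1 x -> recv_power P pre1 x <= recv_power P pre2 y ->
  recv_rate P N pre1 x <= recv_rate P N pre2 y.
Proof.
  intros hN H0 H1; unfold recv_rate.
  apply Rmult_le_compat_l; [lra|].
  assert (0 < / N) by (apply Rinv_0_lt_compat; lra).
  assert (0 <= / N * recv_power P pre1 x) by (apply Rmult_le_pos; lra).
  assert (Hle : / N * recv_power P pre1 x <= / N * recv_power P pre2 y)
    by (apply Rmult_le_compat_l; lra).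
  destruct (Rle_lt_or_eq_dec _ _ Hle) as [Hlt|Heq].
  - left; apply ln_increasing; lra.
  - rewrite Heq; lra.
Qed.

Lemma list_min_le (l : list R) y : In y l -> list_min l <= y.
Proof.
  induction l as [|z [|z' l] IH]; intros Hy; [destruct Hy| |].
  - destruct Hy as [<-|[]]; simpl; lra.
  - change (Rmin z (list_min (z' :: l)) <= y).
    destruct Hy as [<-|Hy]; [apply Rmin_l|].
    eapply Rle_trans; [apply Rmin_r|exact (IH Hy)].
Qed.

Lemma list_min_glb (l : list R) v :
  l <> [] -> (forall y, In y l -> v <= y) -> v <= list_min l.
Proof.
  induction l as [|z [|z' l] IH]; intros Hne Hv; [congruence| |].
  - apply Hv; left; reflexivity.
  - change (v <= Rmin z (list_min (z' :: l))).
    apply Rmin_glb; [apply Hv; left; reflexivity|].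
    apply IH; [discriminate|intros; apply Hv; right; assumption].
Qed.

Lemma in_recv_rates (P : nat -> nat -> R) N pre rest r :
  In r (recv_rates P N pre rest) <->
  exists l x l', rest = l ++ x :: l' /\ r = recv_rate P N (pre ++ l) x.
Proof.
  revert pre; induction rest as [|y rest IH]; intro pre; simpl.
  - split; [intros []|intros (l & x & l' & E & _); destruct l; discriminate].
  - rewrite IH; split.
    + intros [<-|(l & x & l' & -> & ->)].
      * exists [], y, rest; rewrite app_nil_r; split; reflexivity.
      * exists (y :: l), x, l'; rewrite <- app_assoc; split; reflexivity.
    + intros ([|z l] & x & l' & E & ->); injection E as E1 E2.
      * left; subst; rewrite app_nil_r; reflexivity.
      * right; exists l, x, l'; subst; rewrite <- app_assoc; split; reflexivity.
Qed.

Lemma R_DF_le_rate (P : nat -> nat -> R) N M l x r :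
  M = l ++ x :: r -> l <> [] -> R_DF P N M <= recv_rate P N l x.
Proof.
  intros -> Hl; destruct l as [|m l]; [congruence|]; unfold R_DF; simpl app.
  apply list_min_le, in_recv_rates; exists l, x, r; split; reflexivity.
Qed.

Lemma R_DF_ge_rates (P : nat -> nat -> R) N M v :
  (2 <= length M)%nat ->
  (forall l x r, M = l ++ x :: r -> l <> [] -> v <= recv_rate P N l x) ->
  v <= R_DF P N M.
Proof.
  intros Hlen Hv; destruct M as [|m rest]; [simpl in Hlen; lia|]; unfold R_DF.
  apply list_min_glb; [destruct rest; [simpl in Hlen; lia|discriminate]|].
  intros r Hr; apply in_recv_rates in Hr as (l & x & l' & E & ->).
  apply (Hv (m :: l) x l'); [rewrite E; reflexivity|discriminate].
Qed.

Lemma R_DF_dominated (P : nat -> nat -> R) N a b s :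
  a <> [] -> s <> [] ->
  (forall l x r, s = l ++ x :: r ->
     exists l' y r', b = l' ++ y :: r' /\
       recv_rate P N (a ++ l') y <= recv_rate P N (a ++ l) x) ->
  R_DF P N (a ++ b) <= R_DF P N (a ++ s).
Proof.
  intros Ha Hs Hdom.
  apply R_DF_ge_rates.
  { destruct a, s; try congruence; simpl; rewrite length_app; simpl; lia. }
  intros l x r E Hl; symmetry in E.
  destruct (app_eq_app _ _ _ _ E) as [l0 [[El Es]|[Ea Er]]].
  - destruct (Hdom l0 x r Es) as (l' & y & r' & Eb & Hle); subst l.
    eapply Rle_trans; [|exact Hle].
    apply (R_DF_le_rate _ _ _ _ _ r'); [rewrite Eb, <- app_assoc; reflexivity|].
    destruct a; [congruence|discriminate].
  - destruct l0 as [|y l0]; simpl in Er.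
    + destruct (Hdom [] x r) as (l' & y & r' & Eb & Hle); [symmetry; assumption|].
      rewrite app_nil_r in Ea, Hle; subst l.
      eapply Rle_trans; [|exact Hle].
      apply (R_DF_le_rate _ _ _ _ _ r'); [rewrite Eb, <- app_assoc; reflexivity|].
      destruct a; [congruence|discriminate].
    + injection Er as -> Er; subst a.
      apply (R_DF_le_rate _ _ _ _ _ (l0 ++ b)); [|assumption].
      rewrite <- app_assoc; reflexivity.
Qed.

Lemma NoDup_remove_nat (c : nat) l : NoDup l -> NoDup (remove Nat.eq_dec c l).
Proof.
  induction 1 as [|y l Hy Hnd IH]; simpl; [constructor|].
  destruct (Nat.eq_dec c y); [assumption|].
  constructor; [|assumption].
  intro Hin; apply in_remove in Hin as [Hin _]; contradiction.
Qed.

Lemma remove_preceding (c : nat) b l x r :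
  remove Nat.eq_dec c b = l ++ x :: r ->
  exists l' r', b = l' ++ x :: r' /\ incl l' (c :: l).
Proof.
  revert l; induction b as [|y b IH]; intros l E; simpl in E.
  - destruct l; discriminate.
  - destruct (Nat.eq_dec c y) as [<-|_].
    + destruct (IH l E) as (l' & r' & -> & Hincl).
      exists (c :: l'), r'; split; [reflexivity|].
      intros z [<-|Hz]; [left; reflexivity|exact (Hincl z Hz)].
    + destruct l as [|z l]; injection E as Ey E.
      * exists [], b; split; [subst; reflexivity|intros z []].
      * destruct (IH l E) as (l' & r' & -> & Hincl); subst z.
        exists (y :: l'), r'; split; [reflexivity|].
        intros z [<-|Hz]; [right; left; reflexivity|].
        destruct (Hincl z Hz) as [<-|Hz']; [left; reflexivity|right; right; exact Hz'].
Qed.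

Lemma remove_unique (c : nat) F T :
  NoDup (F ++ c :: T) -> remove Nat.eq_dec c (F ++ c :: T) = F ++ T.
Proof.
  intro Hnd; assert (Hc := NoDup_remove_2 _ _ _ Hnd).
  rewrite remove_app; simpl; destruct (Nat.eq_dec c c) as [_|]; [|congruence].
  rewrite !notin_remove; [reflexivity| |];
    intro; apply Hc, in_or_app; [right|left]; assumption.
Qed.

Section Swap.

Variables (D : nat) (P : nat -> nat -> R) (N : R).
Hypothesis hP : forall i t, in_S D i -> in_S D t -> i <> t -> 0 < P i t.
Hypothesis hN : 0 < N.

Lemma P_nonneg i t : in_S D i -> in_S D t -> i <> t -> 0 <= P i t.
Proof. intros; left; apply hP; assumption. Qed.

Lemma nearest_neighbor_power a c j :
  nearest_neighbor D P a c -> in_S D j -> ~ In j a ->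
  recv_power P a j <= recv_power P a c.
Proof.
  intros (_ & _ & Hnn) Hj Hja.
  destruct (Nat.eq_dec j c) as [->|Hjc]; [lra|].
  apply recv_power_le_pointwise; intros m Hm; apply Rge_le, Hnn; assumption.
Qed.

Lemma nearest_neighbor_rate a c j :
  (forall x, In x a -> in_S D x) -> nearest_neighbor D P a c ->
  in_S D j -> ~ In j a -> recv_rate P N a j <= recv_rate P N a c.
Proof.
  intros haS hc hj hja.
  apply recv_rate_mono; [assumption| |apply nearest_neighbor_power; assumption].
  apply recv_power_nonneg; intros m Hm.
  apply P_nonneg; auto; intros ->; contradiction.
Qed.

Lemma surviving_node_rate a b c l x r :
  (forall y, In y a -> in_S D y) -> (forall y, In y b -> in_S D y) -> NoDup b ->
  (forall y, In y b -> ~ In y a) -> in_S D c ->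
  remove Nat.eq_dec c b = l ++ x :: r ->
  exists l' r', b = l' ++ x :: r' /\
    recv_rate P N (a ++ l') x <= recv_rate P N (a ++ c :: l) x.
Proof.
  intros haS hbS hbnd hdisj hcS Ex.
  assert (Hxin : In x (remove Nat.eq_dec c b))
    by (rewrite Ex; apply in_or_app; right; left; reflexivity).
  destruct (in_remove Nat.eq_dec b x c Hxin) as [Hxb Hxc].
  assert (hxS : in_S D x) by (apply hbS; assumption).
  assert (Hnd : NoDup (l ++ x :: r)) by (rewrite <- Ex; apply NoDup_remove_nat, hbnd).
  assert (Hxl : ~ In x l)
    by (intro; apply (NoDup_remove_2 _ _ _ Hnd), in_or_app; left; assumption).
  destruct (remove_preceding c b l x r Ex) as (l' & r' & Eb & Hincl).
  exists l', r'; split; [assumption|].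
  assert (Hbnd := hbnd); rewrite Eb in Hbnd.
  assert (Hxl' : ~ In x l')
    by (intro; apply (NoDup_remove_2 _ _ _ Hbnd), in_or_app; left; assumption).
  assert (Ha_nn : forall m, In m a -> 0 <= P m x)
    by (intros m Hm; apply P_nonneg; auto; intros ->; exact (hdisj x Hxb Hm)).
  apply recv_rate_mono; [assumption| |].
  - apply recv_power_nonneg; intros m Hm; apply in_app_or in Hm as [Hm|Hm]; auto.
    apply P_nonneg; [apply hbS; rewrite Eb; apply in_or_app; left|..]; auto.
    intros ->; contradiction.
  - rewrite !recv_power_app; apply Rplus_le_compat_l, recv_power_incl.
    + exact (NoDup_app_remove_r _ _ Hbnd).
    + assumption.
    + intros m [<-|Hm]; apply P_nonneg; auto.
      * assert (Hmb : In m (remove Nat.eq_dec c b))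
          by (rewrite Ex; apply in_or_app; left; assumption).
        apply in_remove in Hmb as [Hmb _]; auto.
      * intros ->; contradiction.
Qed.

Theorem nearest_neighbor_first a b c B2 t :
  a <> [] -> (forall x, In x a -> in_S D x) ->
  b <> [] -> (forall x, In x b -> in_S D x) -> NoDup b ->
  (forall x, In x b -> ~ In x a) ->
  nearest_neighbor D P a c ->
  remove Nat.eq_dec c b = B2 ++ t ->
  R_DF P N (a ++ b) <= R_DF P N (a ++ c :: B2).
Proof.
  intros Ha haS Hb hbS hbnd hdisj hc Erem.
  assert (hcS : in_S D c) by apply hc.
  apply R_DF_dominated; [assumption|discriminate|].
  intros [|c' l] x r Es; injection Es as <- Es.
  -
    destruct b as [|b1 bt]; [congruence|].
    exists [], b1, bt; rewrite !app_nil_r; split; [reflexivity|].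
    assert (Hb1 : In b1 (b1 :: bt)) by (left; reflexivity).
    apply nearest_neighbor_rate; [assumption|assumption|apply hbS, Hb1|apply hdisj, Hb1].
  -
    destruct (surviving_node_rate a b c l x (r ++ t)) as (l' & r' & Hmatch); auto.
    + rewrite Erem, Es, <- app_assoc; reflexivity.
    + exists l', x, r'; exact Hmatch.
Qed.

End Swap.

Theorem lemma2 (D : nat) (P : nat -> nat -> R) (N : R)
  (a b : list nat) (c : nat)
  (hD : (2 <= D)%nat)
  (hP : forall i t, in_S D i -> in_S D t -> i <> t -> 0 < P i t)
  (hN : 0 < N)
  (* M = (a_1^star, ..., a_L^star) is a route with a_1^star = 1, L >= 1 *)
  (ha_head : hd_error a = Some 1%nat)
  (ha_S : forall x, In x a -> in_S D x)
  (ha_nodup : NoDup a)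
  (* for 1 <= k < L, a_{k+1}^star is a nearest neighbor w.r.t. (a_1^star,...,a_k^star) *)
  (ha_nn : forall k, (1 <= k < length a)%nat -> nearest_neighbor D P (firstn k a) (nth k a 0%nat))
  (* b_1, ..., b_K distinct nodes not in M, K >= 1 *)
  (hK : (1 <= length b)%nat)
  (hb_S : forall x, In x b -> in_S D x)
  (hb_nodup : NoDup b)
  (hb_disj : forall x, In x b -> ~ In x a)
  (hb1 : ~ nearest_neighbor D P a (nth 0 b 0%nat))
  (* c = a_{L+1}^star is a nearest neighbor w.r.t. M *)
  (hc : nearest_neighbor D P a c) :
  (~ In c (firstn (length b - 1) b) ->
     R_DF P N (a ++ c :: firstn (length b - 1) b) >= R_DF P N (a ++ b)) /\
  (forall k, (k < length b - 1)%nat -> nth k b 0%nat = c ->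
     R_DF P N (a ++ c :: (firstn k b ++ skipn (S k) b)) >= R_DF P N (a ++ b)).
Proof.
  assert (Ha : a <> []) by (destruct a; discriminate).
  assert (Hb : b <> []) by (destruct b; simpl in hK; [lia|discriminate]).
  split.
  - (* c is not among b_1..b_{K-1}: deleting c leaves b_1..b_{K-1} in front *)
    intro Hnc; apply Rle_ge.
    apply (nearest_neighbor_first D P N hP hN a b c _
             (remove Nat.eq_dec c (skipn (length b - 1) b))); auto.
    rewrite <- (firstn_skipn (length b - 1) b) at 1.
    rewrite remove_app, notin_remove by assumption; reflexivity.
  - (* c = b_k: deleting c from b gives exactly the new suffix *)
    intros k Hk Hnth; apply Rle_ge.
    apply (nearest_neighbor_first D P N hP hN a b c _ []); auto.
    assert (Eb : firstn k b ++ c :: skipn (S k) b = b)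
      by (apply firstn_skipn_middle; rewrite <- Hnth; apply nth_error_nth'; lia).
    rewrite <- Eb in hb_nodup.
    rewrite app_nil_r, <- (remove_unique c _ _ hb_nodup), Eb; reflexivity.
Qed.
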